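(* Let $(\mathcal{L}\subset\mathbb{R}^s,\mathbb{R}^n)$ be a generic cut-and-project scheme, let $L\in\mathbb{R}^{s\times s}$ be a matrix associated to $\mathcal{L}$, and let $\Sigma(\Omega)\subset\mathbb{R}^n$ be a cut-and-project set constructed from this scheme. If $A:\mathbb{R}^n\to\mathbb{R}^n$ is a linear map with $A\Sigma(\Omega)\subset\Sigma(\Omega)$, then $A\pi_\parallel(\mathcal{L})\subset\pi_\parallel(\mathcal{L})$ and there exist uniquely defined matrices $C\in\mathbb{Z}^{s\times s}$ and $B\in\mathbb{R}^{(s-n)\times(s-n)}$ such that $\begin{pmatrix}A&O\\O&B\end{pmatrix}L=LC$.
   Context: A lattice $\mathcal{L}\subset\mathbb{R}^s$ is $\{L\mathbf{r}:\mathbf{r}\in\mathbb{Z}^s\}$ for a non-singular $L\in\mathbb{R}^{s\times s}$ (a matrix associated to $\mathcal{L}$). For $1\le n<s$, the cut-and-project scheme $(\mathcal{L}\subset\mathbb{R}^s,\mathbb{R}^n)$ consists of $\mathcal{L}$ with projections $\pi_\parallel(\mathbf{x})=(x_1,\dots,x_n)^\top$, $\pi_\perp(\mathbf{x})=(x_{n+1},\dots,x_s)^\top$; it is generic if $\pi_\parallel|_{\mathcal{L}}$ and $\pi_\perp|_{\mathcal{L}}$ are injective and $\pi_\perp(\mathcal{L})$ is dense in $\mathbb{R}^{s-n}$. For a bounded $\Omega\subset\mathbb{R}^{s-n}$ with $\overline{\Omega^\circ}=\overline{\Omega}\neq\emptyset$, the cut-and-project set is $\Sigma(\Omega)=\{\pi_\parallel(\mathbf{l}):\mathbf{l}\in\mathcal{L},\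 \pi_\perp(\mathbf{l})\in\Omega\}$. *)

From HB Require Import structures.
From mathcomp Require Import all_boot all_order all_algebra.
From mathcomp Require Import all_classical all_reals all_analysis.
Set Implicit Arguments. Unset Strict Implicit. Unset Printing Implicit Defensive.
Import Order.TTheory GRing.Theory Num.Theory.
Import numFieldNormedType.Exports.
Local Open Scope classical_set_scope.
Local Open Scope ring_scope.

(* The ambient space R^s is written R^(n+m) with
   m = s - n, as column vectors 'cV[R]_(n+m); the first n coordinates form
   the "physical" space, the last m the "internal" space. *)

Definition intmx (R : realType) (p q : nat) (C : 'M[int]_(p, q)) : 'M[R]_(p, q) :=
  map_mx (fun z : int => z%:~R) C.

Definition lattice (R : realType) (s : nat) (L : 'M[R]_s) : set 'cV[R]_s :=
  [set x | exists r : 'cV[int]_s, x = L *m intmx R r].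

Definition pi_par (R : realType) (n m : nat) (x : 'cV[R]_(n + m)) : 'cV[R]_n :=
  usubmx x.
Definition pi_perp (R : realType) (n m : nat) (x : 'cV[R]_(n + m)) : 'cV[R]_m :=
  dsubmx x.

Definition generic_cps (R : realType) (n m : nat) (L : 'M[R]_(n + m)) : Prop :=
  [/\ {in lattice L &, injective (@pi_par R n m)},
      {in lattice L &, injective (@pi_perp R n m)} &
      dense (@pi_perp R n m @` lattice L)].

Definition admissible_window (R : realType) (m : nat) (W : set 'cV[R]_m) : Prop :=
  [/\ bounded_set W, closure (interior W) = closure W & closure W !=set0].

Definition cps_set (R : realType) (n m : nat) (L : 'M[R]_(n + m))
    (W : set 'cV[R]_m) : set 'cV[R]_n :=
  [set pi_par l | l in [set l | lattice L l /\ W (pi_perp l)]].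

(* If [A] maps the cut-and-project set into itself, it maps [pi_par l] into
   [pi_par (lattice L)] for every lattice point [l] with small internal part:
   take a lattice point [l0] whose internal part lies deep inside the window
   and subtract the images of [pi_par l0] and [pi_par (l0 + l)].  Since
   [pi_perp (lattice L)] is dense, every lattice point is a sum of such small
   ones.  Applied to the columns of [L], this gives an integer matrix [C] with
   [A U = U C], [U] the upper rows of [L]; then [Q = L C L^-1] has the form
   [block_mx A 0 Q21 Q22].  By injectivity of [pi_par], [Q] maps lattice points
   with internal part in the window to such points, so [Q21 (pi_par l)] stays
   bounded while [pi_perp l] is small.  Scaling [l] shows that it is even
   O(1/N) when [pi_perp l] is, and Dirichlet's simultaneous approximation
   provides lattice points with tiny internal part whose [pi_par] is close to a
   positive multiple of any given vector, forcing [Q21 = 0]. *)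

From HB Require Import structures.
From mathcomp Require Import all_boot all_order all_algebra.
From mathcomp Require Import all_classical all_reals all_analysis.
From mathcomp Require Import ring lra.
Import Order.TTheory GRing.Theory Num.Theory.
Import numFieldNormedType.Exports.
Local Open Scope classical_set_scope.
Local Open Scope ring_scope.
Set Implicit Arguments.
Unset Strict Implicit.
Unset Printing Implicit Defensive.

Lemma col_matrixP (T : Type) p q (X Y : 'M[T]_(p, q)) :
  (forall j, col j X = col j Y) -> X = Y.
Proof.
by move=> eqXY; apply/matrixP => i j; move/colP/(_ i): (eqXY j); rewrite !mxE.
Qed.

Lemma choice_col (T : Type) p q (P : 'I_q -> 'cV[T]_p -> Prop) :
  (forall j, exists c, P j c) -> exists M : 'M[T]_(p, q), forall j, P j (col j M).
Proof.
move=> /choice[f Pf]; exists (\matrix_(i, j) f j i 0) => j.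
by rewrite (_ : col j _ = f j) //; apply/colP => i; rewrite !mxE.
Qed.

Section IntMatrix.
Variable R : realType.

Lemma intmx_inj p q : injective (@intmx R p q).
Proof.
move=> C C' /matrixP eqCC'; apply/matrixP => i j.
by move: (eqCC' i j); rewrite !mxE => /intr_inj.
Qed.

Lemma lattice_add s (L : 'M[R]_s) x y :
  lattice L x -> lattice L y -> lattice L (x + y).
Proof. by move=> [r ->] [r' ->]; exists (r + r'); rewrite /intmx map_mxD mulmxDr. Qed.

Lemma lattice_sub s (L : 'M[R]_s) x y :
  lattice L x -> lattice L y -> lattice L (x - y).
Proof. by move=> [r ->] [r' ->]; exists (r - r'); rewrite /intmx map_mxB mulmxBr. Qed.

Lemma lattice_natmul s (L : 'M[R]_s) x k : lattice L x -> lattice L (x *+ k).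
Proof.
move=> Lx; elim: k => [|k IHk]; last by rewrite mulrS; apply: lattice_add.
by exists 0; rewrite mulr0n /intmx map_mx0 mulmx0.
Qed.

End IntMatrix.

Section MatrixNorm.
Variable R : realType.

Lemma mx_entry_le_norm p q (M : 'M[R]_(p, q)) i j : `|M i j| <= `|M|.
Proof.
by rewrite [X in _ <= X]mx_normrE; exact: (le_bigmax _ (fun ij => `|M ij.1 ij.2|) (i, j)).
Qed.

Lemma mx_norm_le p q (M : 'M[R]_(p, q)) e :
  0 <= e -> (forall i j, `|M i j| <= e) -> `|M| <= e.
Proof.
by move=> e_ge0 Me; rewrite [X in X <= _]mx_normrE; apply: bigmax_le => // -[i j] _.
Qed.

Lemma mulmx_lipschitz p q (M : 'M[R]_(p, q)) :
  exists2 c : R, 0 < c & forall x : 'cV_q, `|M *m x| <= c * `|x|.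
Proof.
have sum_ge0 i : 0 <= \sum_j `|M i j| by apply: sumr_ge0.
exists (1 + \sum_i \sum_j `|M i j|) => [|x].
  by rewrite ltr_pwDl // sumr_ge0.
apply: mx_norm_le => [|i k]; first by rewrite mulr_ge0 // addr_ge0 // sumr_ge0.
rewrite (ord1 k) mxE (le_trans (ler_norm_sum _ _ _)) //.
apply: (@le_trans _ _ ((\sum_j `|M i j|) * `|x|)).
  by rewrite mulr_suml; apply: ler_sum => j _; rewrite normrM ler_wpM2l ?mx_entry_le_norm.
rewrite ler_wpM2r // (bigD1 i) //=.
have : 0 <= \sum_(i' | i' != i) \sum_j `|M i' j| by apply: sumr_ge0.
lra.
Qed.

Lemma mulmx_small p q (M : 'M[R]_(p, q)) e :
  0 < e -> exists2 d : R, 0 < d & forall x : 'cV_q, `|x| < d -> `|M *m x| < e.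
Proof.
move=> e_gt0; have [c c_gt0 Mc] := mulmx_lipschitz M.
exists (e / c) => [|x x_lt]; first by rewrite divr_gt0.
by rewrite (le_lt_trans (Mc x)) // mulrC -ltr_pdivlMr.
Qed.

End MatrixNorm.

Section Dirichlet.
Variable R : realType.

Definition fract (x : R) : R := x - (Num.floor x)%:~R.

Lemma fract_ge0 x : 0 <= fract x.
Proof. by rewrite subr_ge0 floor_le. Qed.

Lemma fract_lt1 x : fract x < 1.
Proof. by have := floorD1_gt x; rewrite intrD /fract; lra. Qed.

Lemma truncn_eq_dist_lt1 (x y : R) :
  0 <= x -> 0 <= y -> Num.truncn x = Num.truncn y -> `|x - y| < 1.
Proof.
move=> x_ge0 y_ge0 eq_xy.
have /andP[] := truncn_itv x_ge0; have /andP[] := truncn_itv y_ge0.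
rewrite eq_xy -natr1 ltr_norml; lra.
Qed.

(* Pigeonhole on the (N ^ p).+1 multiples 0, v, ..., (N ^ p) v, sorted into
   the N ^ p boxes of side 1/N of the unit cube by their fractional parts. *)
Lemma dirichlet_approx p (v : 'cV[R]_p) e : 0 < e ->
  exists2 q : nat, (0 < q)%N & exists r : 'cV[int]_p, `|intmx R r - q%:R *: v| < e.
Proof.
move=> e_gt0; set N := (Num.truncn e^-1).+1.
have N_gt0 : 0 < N%:R :> R by rewrite ltr0n.
have invN_lt : N%:R^-1 < e.
  by rewrite -(invrK e) ltf_pV2 ?posrE ?invr_gt0 // truncnS_gt.
pose box (q : nat) i := Num.truncn (N%:R * fract (q%:R * v i 0)).
have box_lt q i : (box q i < N)%N.
  rewrite truncn_lt_nat ?mulr_ge0 ?fract_ge0 //.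
  by rewrite -[ltRHS]mulr1 ltr_pM2l // fract_lt1.
pose f (q : 'I_(N ^ p).+1) := [ffun i => Ordinal (box_lt q i)].
have /injectivePn[q1 [q2 neq_q12 eq_f]] : ~~ injectiveb f.
  by apply/injectiveP => /leq_card; rewrite card_ffun !card_ord ltnn.
have close i : `|fract (q1%:R * v i 0) - fract (q2%:R * v i 0)| < N%:R^-1.
  move/ffunP/(_ i)/(congr1 val): eq_f; rewrite !ffunE /=.
  move/truncn_eq_dist_lt1; rewrite -mulrBr normrM ger0_norm ?ler0n //.
  by rewrite -ltr_pdivlMl // mulr1; apply; rewrite mulr_ge0 ?fract_ge0.
clear f eq_f.
wlog lt_q12 : q1 q2 neq_q12 close / (q1 < q2)%N.
  move=> gen; case: (ltngtP q1 q2) => [|lt_q21|/val_inj eq_q12]; first exact: gen.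
    by apply: (gen q2 q1) => // [|i]; rewrite 1?eq_sym // distrC.
  by rewrite eq_q12 eqxx in neq_q12.
exists (q2 - q1)%N; first by rewrite subn_gt0.
exists (\col_i (Num.floor (q2%:R * v i 0) - Num.floor (q1%:R * v i 0))).
apply: le_lt_trans invN_lt; apply: mx_norm_le => [|i k]; first by rewrite invr_ge0 ltW.
rewrite (ord1 k) !mxE natrB; last exact: ltnW.
rewrite intrD intrN mulrBl; apply/ltW; move: (close i); rewrite /fract.
by congr (`|_| < _); ring.
Qed.

End Dirichlet.

Section Projections.
Variables (R : realType) (n m : nat).

Lemma pi_parD (x y : 'cV[R]_(n + m)) : pi_par (x + y) = pi_par x + pi_par y.
Proof. exact: raddfD. Qed.

Lemma pi_parB (x y : 'cV[R]_(n + m)) : pi_par (x - y) = pi_par x - pi_par y.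
Proof. exact: raddfB. Qed.

Lemma pi_perpD (x y : 'cV[R]_(n + m)) : pi_perp (x + y) = pi_perp x + pi_perp y.
Proof. exact: raddfD. Qed.

Lemma pi_perpB (x y : 'cV[R]_(n + m)) : pi_perp (x - y) = pi_perp x - pi_perp y.
Proof. exact: raddfB. Qed.

Lemma pi_perpMn (x : 'cV[R]_(n + m)) k : pi_perp (x *+ k) = pi_perp x *+ k.
Proof. exact: raddfMn. Qed.

Lemma pi_parMn (x : 'cV[R]_(n + m)) k : pi_par (x *+ k) = pi_par x *+ k.
Proof. exact: raddfMn. Qed.

Lemma pi_par_mul (L : 'M[R]_(n + m)) x : pi_par (L *m x) = usubmx L *m x.
Proof. by rewrite /pi_par mul_usub_mx. Qed.

Lemma pi_perp_mul (L : 'M[R]_(n + m)) x : pi_perp (L *m x) = dsubmx L *m x.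
Proof. by rewrite /pi_perp mul_dsub_mx. Qed.

End Projections.

Section LowerBlockVanishing.
Variables (R : realType) (n m : nat) (L : 'M[R]_(n + m)).
Hypothesis L_unit : L \in unitmx.

Lemma lattice_near_par_multiple (x : 'cV[R]_n) e : 0 < e ->
  exists2 q : nat, (0 < q)%N &
  exists2 w, `|w| < e & lattice L (L *m w + q%:R *: col_mx x 0).
Proof.
move=> e_gt0; have [q q_gt0 [r close]] := dirichlet_approx (invmx L *m col_mx x 0) e_gt0.
exists q => //; exists (intmx R r - q%:R *: (invmx L *m col_mx x 0)) => //.
by exists r; rewrite mulmxBr -scalemxAr mulKVmx // subrK.
Qed.

Lemma lattice_bounded_natmul k (M : 'M[R]_(k, n)) (d T : R) N l :
  (forall l, lattice L l -> `|pi_perp l| < d -> `|M *m pi_par l| <= T) ->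
  lattice L l -> N%:R * `|pi_perp l| < d -> N%:R * `|M *m pi_par l| <= T.
Proof.
move=> MT Ll; have := MT _ (lattice_natmul N Ll).
by rewrite pi_perpMn pi_parMn (raddfMn (mulmx M)) !normrMn !mulr_natl.
Qed.

Lemma lattice_bounded_mx_eq0 k (M : 'M[R]_(k, n)) (d T : R) : 0 < d ->
  (forall l, lattice L l -> `|pi_perp l| < d -> `|M *m pi_par l| <= T) -> M = 0.
Proof.
move=> d_gt0 MT; apply: col_matrixP => j; rewrite col0 colE.
set x := delta_mx j 0; have [//|Mx_neq0] := eqVneq (M *m x) 0; exfalso.
have Mx_gt0 : 0 < `|M *m x| by rewrite normr_gt0.
set N := (Num.truncn (2 * T / `|M *m x|)).+1.
have N_gt0 : 0 < N%:R :> R by rewrite ltr0n.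
have T_lt : T < N%:R * (`|M *m x| / 2).
  have := truncnS_gt (2 * T / `|M *m x|).
  by rewrite ltr_pdivrMr // mulrA ltr_pdivlMr // -/N; lra.
have [e1 e1_gt0 small1] := mulmx_small (dsubmx L) (divr_gt0 d_gt0 N_gt0).
have [e2 e2_gt0 small2] :=
  mulmx_small (M *m usubmx L) (divr_gt0 Mx_gt0 (ltr0Sn _ 1)).
have [|q q_gt0 [w w_small Lw]] := lattice_near_par_multiple x (e := Num.min e1 e2).
  by rewrite lt_min e1_gt0.
move: w_small; rewrite lt_min => /andP[/small1 perp_small /small2 par_err].
set l := L *m w + q%:R *: col_mx x 0.
have perp_l : pi_perp l = dsubmx L *m w.
  by rewrite pi_perpD pi_perp_mul /pi_perp linearZ /= col_mxKd scaler0 addr0.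
have par_l : M *m pi_par l = M *m usubmx L *m w + q%:R *: (M *m x).
  by rewrite pi_parD pi_par_mul /pi_par linearZ /= col_mxKu mulmxDr scalemxAr mulmxA.
have upper : N%:R * `|M *m pi_par l| <= T.
  apply: lattice_bounded_natmul MT Lw _.
  by rewrite perp_l mulrC -ltr_pdivlMr.
have lower : `|M *m x| / 2 <= `|M *m pi_par l|.
  have : `|M *m x| <= `|q%:R *: (M *m x)|.
    by rewrite normrZ ger0_norm // ler_peMl // ler1n.
  have := lerB_normD (q%:R *: (M *m x)) (M *m usubmx L *m w).
  by rewrite par_l [M *m _ *m _ + _]addrC; lra.
by have := ler_wpM2l (ltW N_gt0) lower; lra.
Qed.

End LowerBlockVanishing.

Section Window.
Variables (R : realType) (V : normedModType R) (W : set V).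

Lemma interior_ball : closure (interior W) = closure W -> closure W !=set0 ->
  exists c, exists2 d : R, 0 < d & forall y, `|c - y| < d -> W y.
Proof.
move=> cl_int [y Wy]; have [c Wc] : interior W !=set0.
  by apply/set0P/eqP => int0; move: Wy; rewrite -cl_int int0 closure0.
move/nbhs_ballP: Wc => [d /= d_gt0 ballW]; exists c, d => // z cz.
by apply: ballW; rewrite -ball_normE.
Qed.

Lemma bounded_set_normr_le : bounded_set W -> exists K : R, forall y, W y -> `|y| <= K.
Proof. by case=> K [_ WK]; exists (K + 1) => y Wy; apply: (WK (K + 1)) => //; lra. Qed.

End Window.

Section CutAndProject.
Variables (R : realType) (n m : nat) (L : 'M[R]_(n + m)).
Hypothesis par_inj : {in lattice L &, injective (@pi_par R n m)}.
Hypothesis perp_dense : dense (@pi_perp R n m @` lattice L).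

Lemma lattice_perp_near (y : 'cV[R]_m) e : 0 < e ->
  exists2 l, lattice L l & `|y - pi_perp l| < e.
Proof.
move=> e_gt0.
have [|z [near_y [l Ll lz]]] := perp_dense (O := ball y e) _ (ball_open _ _).
  by exists y; exact: ballxx.
by exists l; rewrite // lz; move: near_y; rewrite -ball_normE.
Qed.

Lemma lattice_sum_ind (P : 'cV[R]_(n + m) -> Prop) d : 0 < d ->
  (forall l, lattice L l -> `|pi_perp l| < d -> P l) ->
  (forall x y, lattice L x -> lattice L y -> P x -> P y -> P (x + y)) ->
  forall l, lattice L l -> P l.
Proof.
move=> d_gt0 P_small P_add.
suff P_ball k l : lattice L l -> `|pi_perp l| < k.+1%:R * d -> P l.
  move=> l Ll; apply: (P_ball (Num.truncn (`|pi_perp l| / d))) => //.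
  by rewrite -ltr_pdivrMr // truncnS_gt.
elim: k l => [|k IHk] l Ll l_lt; first by apply: P_small; rewrite // mul1r in l_lt.
set v := pi_perp l; set b : R := k.+2%:R^-1.
have b_gt0 : 0 < b by rewrite invr_gt0.
have b_lt1 : b < 1 by rewrite invf_lt1 // ltr1n.
have bd : b * (k.+2%:R * d) = d by rewrite mulrA mulVf ?mul1r.
have k2 : k.+2%:R = k.+1%:R + 1 :> R by rewrite -natr1.
(* A lattice point [p] with [pi_perp p] near [(1 - b) v] splits [l] as
   [(l - p) + p] with [pi_perp (l - p)] of norm [< d] and [pi_perp p] of norm
   [< k.+1 * d]. *)
have [z [[near0 nearv] [p Lp pz]]] :
    (ball 0 (k.+1%:R * d) `&` ball v d) `&` (@pi_perp R n m @` lattice L) !=set0.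
  apply: perp_dense; last exact: openI (ball_open _ _) (ball_open _ _).
  exists ((1 - b) *: v); rewrite -!ball_normE /= sub0r normrN normrZ.
  rewrite scalerBl scale1r opprB addrCA subrr addr0 normrZ !ger0_norm ?subr_ge0 ?ltW //.
  split; last by rewrite -bd ltr_pM2l.
  have : (1 - b) * `|v| < (1 - b) * (k.+2%:R * d) by rewrite ltr_pM2l ?subr_gt0.
  by rewrite !mulrBl !mul1r bd k2; lra.
move: near0 nearv; rewrite -pz -!ball_normE /= sub0r normrN => near0 nearv.
rewrite -(subrK p l); apply: P_add => //; first exact: lattice_sub.
  by apply: P_small; [exact: lattice_sub | rewrite pi_perpB].
exact: IHk.
Qed.

Variables (W : set 'cV[R]_m) (A : 'M[R]_n).
Hypothesis AW : (fun x => A *m x) @` cps_set L W `<=` cps_set L W.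
Variables (c : 'cV[R]_m) (d : R).
Hypotheses (d_gt0 : 0 < d) (ball_W : forall y, `|c - y| < d -> W y).

Lemma lattice_window_ball : exists l0, [/\ lattice L l0, W (pi_perp l0) &
  forall l, `|pi_perp l| < d / 2 -> W (pi_perp (l0 + l))].
Proof.
have [l0 Ll0 near_c] := lattice_perp_near c (divr_gt0 d_gt0 (ltr0Sn _ 1)).
exists l0; split=> [||l l_small]; [by [] | apply: ball_W (lt_le_trans near_c _) |].
  by rewrite ler_pdivrMr // ler_peMr ?ltW //; lra.
apply: ball_W; rewrite pi_perpD opprD addrA.
by apply: le_lt_trans (ler_normB _ _) _; lra.
Qed.

Lemma mulmx_cps_set l : lattice L l -> W (pi_perp l) ->
  exists2 l', lattice L l' /\ W (pi_perp l') & A *m pi_par l = pi_par l'.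
Proof.
move=> Ll Wl; have [l' Wl' par_l'] : cps_set L W (A *m pi_par l).
  by apply: AW; exists (pi_par l) => //; exists l.
by exists l'.
Qed.

Lemma mulmx_pi_par_lattice l : lattice L l ->
  exists2 l', lattice L l' & A *m pi_par l = pi_par l'.
Proof.
have [l0 [Ll0 W_l0 W_l0D]] := lattice_window_ball.
move: l; apply: (lattice_sum_ind (d := d / 2)) => [||x y Lx Ly [x' Lx' Ex] [y' Ly' Ey]].
- exact: divr_gt0.
- move=> l Ll l_small.
  have [l1 [Ll1 _] par_l1] := mulmx_cps_set (lattice_add Ll0 Ll) (W_l0D _ l_small).
  have [l2 [Ll2 _] par_l2] := mulmx_cps_set Ll0 W_l0.
  exists (l1 - l2); first exact: lattice_sub.
  by rewrite pi_parB -par_l1 -par_l2 pi_parD mulmxDr [A *m _ + _]addrC addrK.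
- by exists (x' + y'); [exact: lattice_add | rewrite pi_parD mulmxDr Ex Ey pi_parD].
Qed.

Lemma exists_intmx_usubmx :
  exists C : 'M[int]_(n + m), A *m usubmx L = usubmx L *m intmx R C.
Proof.
have [C colC] : exists C : 'M[int]_(n + m), forall j,
    A *m pi_par (L *m intmx R (delta_mx j 0)) = pi_par (L *m intmx R (col j C)).
  apply: (@choice_col _ _ _ (fun j (r : 'cV[int]_(n + m)) =>
    A *m pi_par (L *m intmx R (delta_mx j 0)) = pi_par (L *m intmx R r))) => j.
  have Lj : lattice L (L *m intmx R (delta_mx j 0)) by exists (delta_mx j 0).
  by have [_ [r ->] E] := mulmx_pi_par_lattice Lj; exists r.
exists C; apply: col_matrixP => j; move: (colC j).
by rewrite !pi_par_mul /intmx map_delta_mx map_col !colE !mulmxA.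
Qed.

Hypothesis L_unit : L \in unitmx.
Variable C : 'M[int]_(n + m).
Hypothesis AUC : A *m usubmx L = usubmx L *m intmx R C.

Let Q := L *m intmx R C *m invmx L.

Lemma Q_block : Q = block_mx A 0 (dlsubmx Q) (drsubmx Q).
Proof.
have uQ : usubmx Q = row_mx A 0.
  rewrite -!mul_usub_mx -AUC -mulmxA mul_usub_mx mulmxV // scalar_mx_block.
  by rewrite block_mxEv col_mxKu mul_mx_row mulmx1 mulmx0.
by rewrite -[Q in LHS]submxK /ulsubmx /ursubmx uQ row_mxKl row_mxKr.
Qed.

Lemma pi_par_Q x : pi_par (Q *m x) = A *m pi_par x.
Proof.
rewrite Q_block /pi_par -mul_usub_mx block_mxEv col_mxKu.
by rewrite -{1}(vsubmxK x) mul_row_col mul0mx addr0.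
Qed.

Lemma pi_perp_Q x :
  pi_perp (Q *m x) = dlsubmx Q *m pi_par x + drsubmx Q *m pi_perp x.
Proof.
by rewrite {1}Q_block /pi_perp -mul_dsub_mx block_mxEv col_mxKd -{1}(vsubmxK x) mul_row_col.
Qed.

Lemma lattice_Q l : lattice L l -> lattice L (Q *m l).
Proof.
by move=> [r ->]; exists (C *m r); rewrite /intmx map_mxM !mulmxA mulmxKV.
Qed.

Lemma window_Q l : lattice L l -> W (pi_perp l) -> W (pi_perp (Q *m l)).
Proof.
move=> Ll Wl; have [l' [Ll' Wl'] par_l'] := mulmx_cps_set Ll Wl.
suff -> : Q *m l = l' by [].
by apply: par_inj; rewrite ?pi_par_Q //; apply: mem_set => //; exact: lattice_Q.
Qed.

Variable K : R.
Hypothesis W_bounded : forall y, W y -> `|y| <= K.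

Lemma dlsubmx_Q_bounded : exists T, forall l, lattice L l ->
  `|pi_perp l| < d / 2 -> `|dlsubmx Q *m pi_par l| <= T.
Proof.
have [l0 [Ll0 W_l0 W_l0D]] := lattice_window_ball.
have [c' c'_gt0 lipQ] := mulmx_lipschitz (drsubmx Q).
exists (K + K + c' * (d / 2)) => l Ll l_small.
have W_Ql0 := window_Q Ll0 W_l0.
have W_Ql0D := window_Q (lattice_add Ll0 Ll) (W_l0D _ l_small).
have perp_Ql : `|pi_perp (Q *m l)| <= K + K.
  have -> : pi_perp (Q *m l) = pi_perp (Q *m (l0 + l)) - pi_perp (Q *m l0).
    by rewrite mulmxDr pi_perpD addrC addKr.
  by apply: le_trans (ler_normB _ _) _; rewrite lerD ?W_bounded.
have -> : dlsubmx Q *m pi_par l = pi_perp (Q *m l) - drsubmx Q *m pi_perp l.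
  by rewrite pi_perp_Q addrK.
apply: le_trans (ler_normB _ _) _; rewrite lerD // (le_trans (lipQ _)) //.
by rewrite ler_wpM2l // ltW.
Qed.

Lemma block_diag_mulmx : block_mx A 0 0 (drsubmx Q) *m L = L *m intmx R C.
Proof.
have [T QT] := dlsubmx_Q_bounded.
have Q21_0 := lattice_bounded_mx_eq0 L_unit (divr_gt0 d_gt0 (ltr0Sn _ 1)) QT.
by rewrite -Q21_0 -Q_block mulmxKV.
Qed.

End CutAndProject.

Section Uniqueness.
Variables (R : realType) (n m : nat) (L : 'M[R]_(n + m)).
Hypothesis L_unit : L \in unitmx.
Hypothesis par_inj : {in lattice L &, injective (@pi_par R n m)}.

Lemma usubmx_intmx_inj k :
  injective (fun C : 'M[int]_(n + m, k) => usubmx L *m intmx R C).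
Proof.
move=> C C' /= eqUC; apply: col_matrixP => j; apply: intmx_inj.
apply: (can_inj (mulKmx L_unit)); apply: par_inj; rewrite ?in_setE.
- by exists (col j C).
- by exists (col j C').
by rewrite !pi_par_mul /intmx !map_col !colE !mulmxA eqUC.
Qed.

Lemma block_diag_mulmx_unique (A : 'M[R]_n) B B' C C' :
  block_mx A 0 0 B *m L = L *m intmx R C ->
  block_mx A 0 0 B' *m L = L *m intmx R C' -> C' = C /\ B' = B.
Proof.
have top B0 C0 : block_mx A 0 0 B0 *m L = L *m intmx R C0 ->
    A *m usubmx L = usubmx L *m intmx R C0.
  move/(congr1 usubmx); rewrite -!mul_usub_mx block_mxEv col_mxKu.
  by rewrite -{1}(vsubmxK L) mul_row_col mul0mx addr0.
move=> E E'; have eqC : C' = C.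
  by apply: usubmx_intmx_inj; rewrite /= -(top _ _ E) -(top _ _ E').
split=> //; move: E'; rewrite eqC -E => /(can_inj (mulmxK L_unit))/(congr1 drsubmx).
by rewrite !block_mxKdr.
Qed.

End Uniqueness.

Theorem proposition2 (R : realType) (n m : nat) (Hn : (1 <= n)%N) (Hm : (1 <= m)%N)
    (L : 'M[R]_(n + m)) (W : set 'cV[R]_m) (A : 'M[R]_n) :
  L \in unitmx ->
  generic_cps L ->
  admissible_window W ->
  (fun x => A *m x) @` cps_set L W `<=` cps_set L W ->
  ((fun x => A *m x) @` (@pi_par R n m @` lattice L) `<=` @pi_par R n m @` lattice L) /\
  (exists C : 'M[int]_(n + m), exists B : 'M[R]_m,
     block_mx A 0 0 B *m L = L *m intmx R C /\
     forall (C' : 'M[int]_(n + m)) (B' : 'M[R]_m),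
       block_mx A 0 0 B' *m L = L *m intmx R C' -> C' = C /\ B' = B).
Proof.
move=> L_unit [par_inj _ perp_dense] [W_bounded W_int W_ne] AW.
have [c [d d_gt0 ball_W]] := interior_ball W_int W_ne.
have [K W_K] := bounded_set_normr_le W_bounded.
split=> [_ [_ [l Ll <-] <-]|].
  by have [l' Ll' ->] := mulmx_pi_par_lattice perp_dense AW d_gt0 ball_W Ll; exists l'.
have [C AUC] := exists_intmx_usubmx perp_dense AW d_gt0 ball_W.
have E := block_diag_mulmx par_inj perp_dense AW d_gt0 ball_W L_unit AUC W_K.
exists C, (drsubmx (L *m intmx R C *m invmx L)); split=> // C' B' E'.
exact (block_diag_mulmx_unique L_unit par_inj E E').
Qed.
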